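(* Let $\tau\ge1$ and consider two candidates $P,Q$. Weighted Majority Rule 1 (defined in the context) has distortion at most $\max\big\{\frac{\tau+2}{\tau},\frac{3\tau-1}{\tau+1}\big\}$; i.e., for every instance, if it selects $P$ then $SC(P)\le\max\{\frac{\tau+2}{\tau},\frac{3\tau-1}{\tau+1}\}\,SC(Q)$.
   Context: Voters $N=\{1,\dots,n\}$ and candidates are points of an arbitrary metric space $(X,d)$. Voter $i$ prefers $P$ to $Q$ only if $d(i,P)\le d(i,Q)$, with preference strength $\alpha_i^{PQ}=d(i,Q)/d(i,P)\ge1$. $SC(Y)=\sum_{i\in N}d(i,Y)$. For two candidates $P,Q$ and a threshold $\tau$, the information available is every voter's preferred candidate and whether that voter's preference strength is $>\tau$ (strong) or $\le\tau$ (weak). Let $A_2$ ($A_1$) be the voters preferring $P$ with strength $>\tau$ ($\le\tau$), and $B_2$ ($B_1$) the voters preferring $Q$ with strength $>\tau$ ($\le\tau$). Weighted Majority Rule 1: if $\tau\ge\sqrt2+1$, give weight $\frac{\tau+1}{\tau-1}$ to each strong voter and weight $1$ to each weak voter; if $\tau<\sqrt2+1$, give weight $\tau$ to each strong voter and weight $1$ to each weak voter. Select $P$ if the total weight of voters preferring $P$ is at least that of voters preferring $Q$ (i.e. $w|A_2|+|A_1|\ge |B_1|+w|B_2|$ for the appropriate strong weight $w$), and $Q$ otherwise (ties may be broken arbitrarily). *)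

From Stdlib Require Import Reals Lra List Bool.
Import ListNotations.
Local Open Scope bool_scope.
Open Scope R_scope.

Record metric_space := MetricSpace {
  mpt :> Type;
  mdist : mpt -> mpt -> R;
  dist_nonneg : forall x y, 0 <= mdist x y;
  dist_self : forall x, mdist x x = 0;
  dist_sep : forall x y, mdist x y = 0 -> x = y;
  dist_sym : forall x y, mdist x y = mdist y x;
  dist_tri : forall x y z, mdist x z <= mdist x y + mdist y z
}.

Definition sumR (n : nat) (f : nat -> R) : R :=
  fold_right Rplus 0 (map f (seq 0 n)).

Definition countV (n : nat) (p : nat -> bool) : R :=
  INR (length (filter p (seq 0 n))).

Definition SC (M : metric_space) (n : nat) (voter : nat -> M) (Y : M) : R :=
  sumR n (fun i => mdist M (voter i) Y).

(* A voter at distance dnear from its preferred candidate and dfar from the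
   other has preference strength alpha = dfar / dnear; it is "strong" iff
   alpha > tau.  Written multiplicatively (tau * dnear < dfar) so that
   dnear = 0 < dfar counts as alpha = +infinity (strong), and the degenerate
   0/0 case (dnear = dfar = 0) counts as alpha = 1 (weak, as tau >= 1). *)
Definition strongb (tau dnear dfar : R) : bool :=
  if Rlt_dec (tau * dnear) dfar then true else false.

(* prefP i = true : voter i prefers P; false : voter i prefers Q. *)
Definition A2 (M : metric_space) (n : nat) (voter : nat -> M) (P Q : M)
  (prefP : nat -> bool) (tau : R) : R :=
  countV n (fun i => prefP i && strongb tau (mdist M (voter i) P) (mdist M (voter i) Q)).
Definition A1 (M : metric_space) (n : nat) (voter : nat -> M) (P Q : M)
  (prefP : nat -> bool) (tau : R) : R :=
  countV n (fun i => prefP i && negb (strongb tau (mdist M (voter i) P) (mdist M (voter i) Q))).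
Definition B2 (M : metric_space) (n : nat) (voter : nat -> M) (P Q : M)
  (prefP : nat -> bool) (tau : R) : R :=
  countV n (fun i => negb (prefP i) && strongb tau (mdist M (voter i) Q) (mdist M (voter i) P)).
Definition B1 (M : metric_space) (n : nat) (voter : nat -> M) (P Q : M)
  (prefP : nat -> bool) (tau : R) : R :=
  countV n (fun i => negb (prefP i) && negb (strongb tau (mdist M (voter i) Q) (mdist M (voter i) P))).

Definition wmr1_weight (tau : R) : R :=
  if Rle_dec (sqrt 2 + 1) tau then (tau + 1) / (tau - 1) else tau.

Definition wmr1_selects_P (M : metric_space) (n : nat) (voter : nat -> M)
  (P Q : M) (prefP : nat -> bool) (tau : R) : Prop :=
  wmr1_weight tau * A2 M n voter P Q prefP tau + A1 M n voter P Q prefP tau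
  >= B1 M n voter P Q prefP tau + wmr1_weight tau * B2 M n voter P Q prefP tau.

From Pilot Require Import Defs.
From Stdlib Require Import Reals Lra List Bool Lia.
Open Scope R_scope.

(* Fix a multiplier lam > 0 and put k = 1 + 2 lam and D = d(P,Q).
   Give each voter a "charge": -1 if it strongly prefers P, -lam if it weakly
   prefers P, +lam if it weakly prefers Q and +1 if it strongly prefers Q.
   Using only the triangle inequality, every voter i satisfies
       d(i,P) - k d(i,Q) <= D * charge(i)
   as soon as lam tau >= 1 and tau - 1 <= lam (tau + 1) (lemma
   [voter_charge_bound]).  Summing over voters, SC(P) - k SC(Q) is at most D
   times -|A2| - lam|A1| + lam|B1| + |B2|, which is <= 0 whenever the weighted
   vote with strong weight w = 1/lam selects P.  Weighted Majority Rule 1 uses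
   w = (tau+1)/(tau-1) for tau >= sqrt 2 + 1 (giving k = (3tau-1)/(tau+1)) and
   w = tau otherwise (giving k = (tau+2)/tau); the two admissibility conditions
   on lam hold in the respective ranges because tau^2 - 2tau - 1 changes sign
   at sqrt 2 + 1.  The file first develops finite sums over voter lists, then
   the per-voter bound, then the summed bound, and finally the theorem. *)

Definition lsum (l : list nat) (f : nat -> R) : R := fold_right Rplus 0 (map f l).

Lemma lsum_cons (a : nat) (l : list nat) (f : nat -> R) :
  lsum (a :: l) f = f a + lsum l f.
Proof. reflexivity. Qed.

Lemma lsum_le (l : list nat) (f g : nat -> R) :
  (forall i, In i l -> f i <= g i) -> lsum l f <= lsum l g.
Proof.
  induction l as [|a l IH]; intros Hfg; [unfold lsum; simpl; lra|].
  rewrite !lsum_cons.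
  pose proof (Hfg a (in_eq a l)).
  pose proof (IH (fun i Hi => Hfg i (in_cons a i l Hi))).
  lra.
Qed.

Lemma lsum_nonneg (l : list nat) (f : nat -> R) :
  (forall i, 0 <= f i) -> 0 <= lsum l f.
Proof.
  intros Hf; induction l as [|a l IH]; [unfold lsum; simpl; lra|].
  rewrite lsum_cons; pose proof (Hf a); lra.
Qed.

Lemma lsum_minus_scal (l : list nat) (c : R) (f g : nat -> R) :
  lsum l (fun i => f i - c * g i) = lsum l f - c * lsum l g.
Proof.
  induction l as [|a l IH]; [unfold lsum; simpl; ring|].
  rewrite !lsum_cons, IH; ring.
Qed.

Lemma lsum_scal (l : list nat) (c : R) (f : nat -> R) :
  lsum l (fun i => c * f i) = c * lsum l f.
Proof.
  induction l as [|a l IH]; [unfold lsum; simpl; ring|].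
  rewrite !lsum_cons, IH; ring.
Qed.

Definition charge (tau lam : R) (b : bool) (p q : R) : R :=
  if b then (if strongb tau p q then -1 else - lam)
  else (if strongb tau q p then 1 else lam).

(* The
   hypotheses on p, q, D are the triangle inequalities of the metric. *)
Lemma voter_charge_bound (tau lam p q D : R) (b : bool) :
  1 <= tau -> 1 <= lam * tau -> tau - 1 <= lam * (tau + 1) ->
  0 <= p -> 0 <= q -> D <= p + q -> p <= q + D -> q <= p + D ->
  (if b then p <= q else q <= p) ->
  p - (1 + 2 * lam) * q <= D * charge tau lam b p q.
Proof.
  intros Htau Hstrong Hweak Hp Hq HDpq HpqD HqpD Hb.
  assert (Hlam : 0 < lam) by nra.
  unfold charge, strongb; destruct b.
  - destruct (Rlt_dec (tau * p) q) as [Hs|Hs].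
    + (* strong for P: lam q >= lam tau p >= p, so the left side is <= -(p+q) *)
      assert (p <= lam * q) by nra.
      lra.
    + (* weak for P: the left side is <= -lam (p + q) because p <= q *)
      assert (lam * D <= lam * (p + q)) by nra.
      assert ((1 + lam) * (p - q) <= 0) by nra.
      lra.
  - destruct (Rlt_dec (tau * q) p) as [Hs|Hs].
    + (* strong for Q: the left side is <= p - q <= D *)
      assert (0 <= lam * q) by nra.
      lra.
    + (* weak for Q: p <= tau q and tau - lam tau <= 1 + lam give
         (1 - lam) p <= (1 + lam) q *)
      assert (lam * (p - q) <= lam * D) by nra.
      assert ((1 - lam) * p <= (1 + lam) * q).
      { destruct (Rle_lt_dec lam 1) as [Hl1|Hl1]; [|nra].
        assert ((1 - lam) * p <= (1 - lam) * (tau * q)) by nra.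
        nra. }
      lra.
Qed.

Lemma lsum_charge (l : list nat) (tau lam : R) (b : nat -> bool) (p q : nat -> R) :
  lsum l (fun i => charge tau lam (b i) (p i) (q i)) =
  - INR (length (filter (fun i => b i && strongb tau (p i) (q i)) l))
  - lam * INR (length (filter (fun i => b i && negb (strongb tau (p i) (q i))) l))
  + lam * INR (length (filter (fun i => negb (b i) && negb (strongb tau (q i) (p i))) l))
  + INR (length (filter (fun i => negb (b i) && strongb tau (q i) (p i)) l)).
Proof.
  induction l as [|a l IH]; [unfold lsum; simpl; ring|].
  rewrite lsum_cons, IH; unfold charge; cbn [filter].
  destruct (b a), (strongb tau (p a) (q a)), (strongb tau (q a) (p a));
    cbn [andb negb length]; rewrite ?S_INR; ring.
Qed.

Lemma vote_rescale (w lam a2 a1 b1 b2 : R) :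
  0 < lam -> lam * w = 1 -> w * a2 + a1 >= b1 + w * b2 ->
  a2 + lam * a1 >= lam * b1 + b2.
Proof.
  intros Hlam Hlw Hvote.
  assert (Hscaled : lam * (w * a2 + a1) >= lam * (b1 + w * b2))
    by (apply Rmult_ge_compat_l; lra).
  replace a2 with (lam * w * a2) by (rewrite Hlw; ring).
  replace b2 with (lam * w * b2) by (rewrite Hlw; ring).
  lra.
Qed.

(* The threshold sqrt 2 + 1 of the rule is the root > 1 of tau^2 - 2 tau - 1. *)
Lemma threshold_factor (tau : R) :
  tau * tau - 2 * tau - 1 = (tau - (sqrt 2 + 1)) * (tau - 1 + sqrt 2).
Proof.
  pose proof (sqrt_sqrt 2 ltac:(lra)).
  nra.
Qed.

Lemma large_tau_multiplier (tau : R) :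
  sqrt 2 + 1 <= tau -> 1 <= (tau - 1) / (tau + 1) * tau.
Proof.
  intros Hbig.
  pose proof (sqrt_lt_R0 2 ltac:(lra)).
  pose proof (threshold_factor tau).
  assert (Hdisc : 0 <= tau * tau - 2 * tau - 1) by nra.
  apply (Rmult_le_reg_r (tau + 1)); [lra|].
  replace ((tau - 1) / (tau + 1) * tau * (tau + 1)) with ((tau - 1) * tau)
    by (field; lra).
  lra.
Qed.

Lemma small_tau_multiplier (tau : R) :
  1 <= tau -> tau < sqrt 2 + 1 -> tau - 1 <= / tau * (tau + 1).
Proof.
  intros Htau Hsmall.
  pose proof (sqrt_lt_R0 2 ltac:(lra)).
  pose proof (threshold_factor tau).
  assert (Hdisc : tau * tau - 2 * tau - 1 < 0) by nra.
  apply (Rmult_le_reg_r tau); [lra|].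
  replace (/ tau * (tau + 1) * tau) with (tau + 1) by (field; lra).
  lra.
Qed.

Section Instance.

Variables (M : metric_space) (n : nat) (voter : nat -> M) (P Q : M)
  (prefP : nat -> bool) (tau : R).
Hypothesis Htau : 1 <= tau.
Hypothesis Hpref : forall i, (i < n)%nat ->
  if prefP i then mdist M (voter i) P <= mdist M (voter i) Q
  else mdist M (voter i) Q <= mdist M (voter i) P.

(* Social costs are nonnegative; needed to enlarge the multiplier to the Rmax. *)
Lemma SC_nonneg (Y : M) : 0 <= SC M n voter Y.
Proof. apply lsum_nonneg; intros i; apply Defs.dist_nonneg. Qed.

Lemma distortion_from_multiplier (lam : R) :
  1 <= lam * tau -> tau - 1 <= lam * (tau + 1) ->
  Defs.A2 M n voter P Q prefP tau + lam * Defs.A1 M n voter P Q prefP tau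
  >= lam * Defs.B1 M n voter P Q prefP tau + Defs.B2 M n voter P Q prefP tau ->
  SC M n voter P <= (1 + 2 * lam) * SC M n voter Q.
Proof.
  intros Hstrong Hweak Hvote.
  set (D := mdist M P Q).
  set (p := fun i => mdist M (voter i) P).
  set (q := fun i => mdist M (voter i) Q).
  assert (Hsum : lsum (seq 0 n) (fun i => p i - (1 + 2 * lam) * q i)
                 <= lsum (seq 0 n) (fun i => D * charge tau lam (prefP i) (p i) (q i))).
  { apply lsum_le; intros i Hi; apply in_seq in Hi.
    apply voter_charge_bound; auto; unfold p, q, D.
    - apply Defs.dist_nonneg.
    - apply Defs.dist_nonneg.
    - rewrite (Defs.dist_sym M (voter i) P); apply Defs.dist_tri.
    - rewrite (Defs.dist_sym M P Q); apply Defs.dist_tri.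
    - apply Defs.dist_tri.
    - apply Hpref; lia. }
  rewrite lsum_minus_scal, lsum_scal, lsum_charge in Hsum.
  change (SC M n voter P - (1 + 2 * lam) * SC M n voter Q
          <= D * (- Defs.A2 M n voter P Q prefP tau - lam * Defs.A1 M n voter P Q prefP tau
                  + lam * Defs.B1 M n voter P Q prefP tau + Defs.B2 M n voter P Q prefP tau))
    in Hsum.
  assert (HD : 0 <= D) by apply Defs.dist_nonneg.
  nra.
Qed.

End Instance.

Theorem mainTheorem3 (M : metric_space) (n : nat) (voter : nat -> M)
  (P Q : M) (prefP : nat -> bool) (tau : R)
  (Htau : 1 <= tau)
  (Hpref : forall i, (i < n)%nat ->
     if prefP i then mdist M (voter i) P <= mdist M (voter i) Q
     else mdist M (voter i) Q <= mdist M (voter i) P)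
  (Hsel : wmr1_selects_P M n voter P Q prefP tau) :
  SC M n voter P <= Rmax ((tau + 2) / tau) ((3 * tau - 1) / (tau + 1)) * SC M n voter Q.
Proof.
  pose proof (SC_nonneg M n voter Q) as HSQ.
  pose proof (sqrt_lt_R0 2 ltac:(lra)) as Hsqrt.
  unfold wmr1_selects_P, wmr1_weight in Hsel.
  destruct (Rle_dec (sqrt 2 + 1) tau) as [Hbig|Hsmall].
  -
    apply Rle_trans with ((3 * tau - 1) / (tau + 1) * SC M n voter Q);
      [|apply Rmult_le_compat_r; [exact HSQ | apply Rmax_r]].
    replace ((3 * tau - 1) / (tau + 1)) with (1 + 2 * ((tau - 1) / (tau + 1)))
      by (field; lra).
    apply (distortion_from_multiplier M n voter P Q prefP tau Htau Hpref).
    + apply large_tau_multiplier; exact Hbig.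
    + right; field; lra.
    + apply (vote_rescale ((tau + 1) / (tau - 1))); [|field; lra|exact Hsel].
      apply Rdiv_lt_0_compat; lra.
  -
    apply Rle_trans with ((tau + 2) / tau * SC M n voter Q);
      [|apply Rmult_le_compat_r; [exact HSQ | apply Rmax_l]].
    replace ((tau + 2) / tau) with (1 + 2 * / tau) by (field; lra).
    apply (distortion_from_multiplier M n voter P Q prefP tau Htau Hpref).
    + right; field; lra.
    + apply small_tau_multiplier; lra.
    + apply (vote_rescale tau); [apply Rinv_0_lt_compat; lra|field; lra|exact Hsel].
Qed.
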